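(* Let $L\ge3$, $m\ge1$, $x_1>\cdots>x_N$ real, $\mathbf X=(x_1,\dots,x_N)^T$. Let $A_{L,\mathrm{par}}(\mathbf X)$ be the set of all vectors obtainable as the (sign-normalized) output of a single sign-activated unit with hidden widths $m_1=\cdots=m_{L-2}=m$ and $m_{L-1}=1$. Then $A_{L,\mathrm{par}}(\mathbf X)$ contains every vector of $\mathcal H^{(m)}$.
   Context: $\sigma(x)=\mathrm{sign}(x)$ with $\mathrm{sign}(x)=1$ if $x\ge0$, $-1$ if $x<0$, applied entrywise. A single unit with widths $m_0=1,m_1,\dots,m_{L-1}=1$ maps $\mathbf X$ to $\mathbf X^{(L)}$ via $\mathbf X^{(1)}=\mathbf X$ and $\mathbf X^{(l+1)}=\sigma(\mathbf X^{(l)}\mathbf W^{(l)}+\mathbf 1\mathbf b^{(l)})\in\{-1,1\}^{N\times m_l}$ for $l\in[L-1]$, with arbitrary $\mathbf W^{(l)}\in\mathbb R^{m_{l-1}\times m_l}$, $\mathbf b^{(l)}\in\mathbb R^{1\times m_l}$. $A_{L,\mathrm{par}}(\mathbf X)$ is the set of all vectors $\epsilon\mathbf X^{(L)}\in\{-1,1\}^N$ over all such weights and biases, where $\epsilon\in\{-1,1\}$ is chosen so that the first entry is $1$. A vector $\mathbf h\in\{-1,1\}^N$ switches at $n>1$ if $h_n\neq h_{n-1}$; $\mathcal H^{(K)}$ is the set of vectors in $\{-1,1\}^N$ with first entry $1$ that switch at most $K$ times. *)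

From mathcomp Require Import all_boot all_order all_algebra.
Set Implicit Arguments. Unset Strict Implicit. Unset Printing Implicit Defensive.
Import Order.TTheory GRing.Theory Num.Theory.
Local Open Scope ring_scope.

Definition sgn {R : realFieldType} (x : R) : R := if 0 <= x then 1 else -1.

(* Layer widths (0-indexed): width 0 = m_0 = 1, width l = m for 1 <= l <= L-2,
   width (L-1) = m_{L-1} = 1. *)
Definition width (L m : nat) (l : nat) : nat :=
  match l with
  | 0 => 1%N
  | l'.+1 => if (l'.+1 < L.-1)%N then m else 1%N
  end.

Lemma width_last (L m : nat) : width L m L.-1 = 1%N.
Proof. by case: L => [|[|L]] //=; rewrite ltnn. Qed.

(* Forward pass: fwd X W b k = X^{(k+1)} in the paper's notation;
   W k = W^{(k+1)} : 'M_(m_k, m_{k+1}), b k = b^{(k+1)} : 'rV_(m_{k+1}). *)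
Fixpoint fwd {R : realFieldType} (L m N : nat) (X : 'cV[R]_N)
  (W : forall k : nat, 'M[R]_(width L m k, width L m k.+1))
  (b : forall k : nat, 'rV[R]_(width L m k.+1)) (k : nat) : 'M[R]_(N, width L m k) :=
  match k with
  | 0 => X
  | k'.+1 => map_mx sgn (fwd X W b k' *m W k' + (const_mx 1 : 'cV[R]_N) *m b k')
  end.

Definition net_out {R : realFieldType} (L m N : nat) (X : 'cV[R]_N)
  (W : forall k : nat, 'M[R]_(width L m k, width L m k.+1))
  (b : forall k : nat, 'rV[R]_(width L m k.+1)) : 'cV[R]_N :=
  castmx (erefl N, width_last L m) (fwd X W b L.-1).

Definition first_is_one {R : realFieldType} (N : nat) (v : 'cV[R]_N) : Prop :=
  forall i : 'I_N, val i = 0%N -> v i 0 = 1.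

Definition A_par {R : realFieldType} (L m N : nat) (X : 'cV[R]_N) (v : 'cV[R]_N) : Prop :=
  exists (W : forall k : nat, 'M[R]_(width L m k, width L m k.+1))
         (b : forall k : nat, 'rV[R]_(width L m k.+1)) (eps : R),
    (eps = 1 \/ eps = -1) /\ v = eps *: net_out X W b /\ first_is_one v.

Definition nswitch {R : realFieldType} (N : nat) (h : 'cV[R]_N) : nat :=
  #|[set j : 'I_N | [exists i : 'I_N, (val j == (val i).+1) && (h j 0 != h i 0)]]|.

Definition H_K {R : realFieldType} (N K : nat) (h : 'cV[R]_N) : Prop :=
  (forall i : 'I_N, h i 0 = 1 \/ h i 0 = -1) /\ first_is_one h /\ (nswitch h <= K)%N.

From mathcomp Require Import all_boot all_order all_algebra.
From mathcomp Require Import lra.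
Set Implicit Arguments. Unset Strict Implicit. Unset Printing Implicit Defensive.
Import Order.TTheory GRing.Theory Num.Theory.
Local Open Scope ring_scope.

(* If h switches exactly at j_1 < ... < j_s with s <= m, then
   h_n = 1 + sum_r (h_{j_r} - h_{j_r - 1}) [j_r <= n].  As x is strictly
   decreasing, [j <= n] = (1 + sign(theta_j - x_n)) / 2 for a threshold theta_j
   lying between x_j and x_{j-1}.  So the first hidden layer computes these
   indicators (unused units get output weight 0), the further hidden layers
   copy them, sign being idempotent on {-1, 1}, and the output unit takes the
   sign of the affine combination above, which is h_n itself. *)

Section Sign.
Variable R : realFieldType.
Implicit Types x : R.

Lemma sgn_ge0 x : 0 <= x -> sgn x = 1.
Proof. by rewrite /sgn => ->. Qed.

Lemma sgn_lt0 x : x < 0 -> sgn x = -1.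
Proof. by rewrite /sgn ltNge => /negbTE ->. Qed.

Lemma sgn_pm1 x : x = 1 \/ x = -1 -> sgn x = x.
Proof. by case=> ->; [apply: sgn_ge0 | apply: sgn_lt0]; rewrite ?ler01 // oppr_lt0 ltr01. Qed.

Lemma sgn_id x : sgn (sgn x) = sgn x.
Proof. by apply: sgn_pm1; rewrite /sgn; case: ifP; [left | right]. Qed.

End Sign.

Definition switch_set (R : realFieldType) (N : nat) (h : 'cV[R]_N) : {set 'I_N} :=
  [set j | [exists i : 'I_N, (val j == (val i).+1) && (h j 0 != h i 0)]].

Lemma nswitchE (R : realFieldType) (N : nat) (h : 'cV[R]_N) : nswitch h = #|switch_set h|.
Proof. by []. Qed.

Section Jumps.
Variables (R : realFieldType) (N : nat) (h : 'cV[R]_N.+1).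

Definition jump (j : nat) : R := h (inord j) 0 - h (inord j.-1) 0.

Lemma jump_notin_switch (j : 'I_N.+1) : j \notin switch_set h -> jump j = 0.
Proof.
case: j => [[|j] lt_jN] /=; rewrite /jump ?subrr //.
rewrite inE => /existsPn /(_ (inord j)) /=.
rewrite inordK ?(ltnW lt_jN) // eqxx negbK => /eqP <-.
by rewrite (_ : inord j.+1 = Ordinal lt_jN) ?subrr //; apply: val_inj; rewrite /= inordK.
Qed.

Lemma sum_jumps (n : 'I_N.+1) :
  h n 0 = h ord0 0 + \sum_(j in switch_set h | (j <= n)%N) jump j.
Proof.
have -> : \sum_(j in switch_set h | (j <= n)%N) jump j = \sum_(j < N.+1 | (j <= n)%N) jump j.
  rewrite [RHS](bigID (mem (switch_set h))) /= [X in _ + X]big1 ?addr0.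
    by apply: eq_bigl => j; rewrite andbC.
  by move=> j /andP[_ /jump_notin_switch].
rewrite -(big_mkord (fun j => j <= n)%N).
rewrite -[X in _ + X](big_nat_widen _ _ _ xpredT _ (ltn_ord n)).
rewrite big_nat_recl // {1}/jump subrr add0r telescope_sumr //.
rewrite /= inord_val (_ : inord 0 = ord0); first by rewrite addrC subrK.
by apply: val_inj; rewrite /= inordK.
Qed.

End Jumps.

Lemma sum_nth_enum (R : pzSemiRingType) (T : finType) (A : {pred T}) (x0 : T) m
    (F : T -> R) : (#|A| <= m)%N ->
  \sum_(r < m) (r < #|A|)%:R * F (nth x0 (enum A) r) = \sum_(j in A) F j.
Proof.
move=> le_Am; under eq_bigr => r _ do rewrite mulr_natl mulrb.
rewrite -big_mkcond -(big_ord_widen _ (fun r => F (nth x0 (enum A) r)) le_Am).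
rewrite -(big_mkord xpredT (fun r => F (nth x0 (enum A) r))) cardE.
by rewrite -(big_nth x0 xpredT F) big_enum.
Qed.

Section Thresholds.
Variables (R : realFieldType) (N : nat) (X : 'cV[R]_N.+1).
Hypothesis X_decr : forall i j : 'I_N.+1, (i < j)%N -> X j 0 < X i 0.

Definition threshold (j : 'I_N.+1) : R :=
  if val j == 0%N then X ord0 0 + 1 else (X (inord j.-1) 0 + X j 0) / 2.

Lemma X_nonincr (i j : 'I_N.+1) : (i <= j)%N -> X j 0 <= X i 0.
Proof. by rewrite leq_eqVlt => /orP[/eqP/val_inj -> // | /X_decr/ltW]. Qed.

Lemma sgn_threshold (j n : 'I_N.+1) :
  sgn (threshold j - X n 0) = if (j <= n)%N then 1 else -1.
Proof.
rewrite /threshold; case: eqP => [j0 | /eqP j0].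
  by rewrite j0 leq0n sgn_ge0 //; have := @X_nonincr ord0 n (leq0n _); lra.
have val_prev : (inord j.-1 : 'I_N.+1) = j.-1 :> nat.
  by rewrite inordK // (leq_ltn_trans (leq_pred _) (ltn_ord j)).
have X_prev : X j 0 < X (inord j.-1) 0 by apply: X_decr; rewrite val_prev prednK // lt0n.
case: leqP => [le_jn | lt_nj].
  by apply: sgn_ge0; have := X_nonincr le_jn; lra.
apply: sgn_lt0; have : X (inord j.-1) 0 <= X n 0.
  by apply: X_nonincr; rewrite val_prev -ltnS prednK // lt0n.
lra.
Qed.

End Thresholds.

Lemma switching_sgn_representation (R : realFieldType) (N m : nat) (X h : 'cV[R]_N) :
    (forall i j : 'I_N, (i < j)%N -> X j 0 < X i 0) -> H_K m h ->
  exists (t a : nat -> R) (beta : R),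
    forall n : 'I_N, h n 0 = sgn (beta + \sum_(r < m) a r * sgn (t r - X n 0)).
Proof.
case: N X h => [|N] X h X_decr [h_pm [h0 h_sw]]; first by exists (fun=> 0), (fun=> 0), 0 => -[].
have le_Sm : (#|switch_set h| <= m)%N by rewrite -nswitchE.
pose s r := nth ord0 (enum (switch_set h)) r.
pose a r := (r < #|switch_set h|)%:R * (jump h (s r) / 2).
exists (fun r => threshold X (s r)), a, (1 + \sum_(r < m) a r) => n.
rewrite -addrA -big_split /=.
under eq_bigr => r _ do rewrite -{1}[a r]mulr1 -mulrDr -mulrA.
rewrite (sum_nth_enum _
  (fun j : 'I_N.+1 => jump h j / 2 * (1 + sgn (threshold X j - X n 0))) le_Sm).
have half_step (x : R) (b : bool) : x / 2 * (1 + (if b then 1 else -1)) = if b then x else 0.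
  by case: b; lra.
under eq_bigr => j _ do rewrite sgn_threshold // half_step.
rewrite -big_mkcondr -(h0 ord0) // -sum_jumps.
exact/esym/sgn_pm1/h_pm.
Qed.

Lemma fwdSE (R : realFieldType) (L m N : nat) (X : 'cV[R]_N)
    (W : forall k : nat, 'M[R]_(width L m k, width L m k.+1))
    (b : forall k : nat, 'rV[R]_(width L m k.+1)) k (n : 'I_N) j :
  fwd X W b k.+1 n j = sgn (\sum_l fwd X W b k n l * W k l j + b k 0 j).
Proof. by rewrite /= !mxE [X in _ + X]big_ord1 !mxE mul1r. Qed.

Section DeepNetwork.
Variables (R : realFieldType) (L m N : nat) (X : 'cV[R]_N).
Variables (t a : nat -> R) (beta : R).
Hypothesis L_ge3 : (3 <= L)%N.

Definition deep_W k : 'M[R]_(width L m k, width L m k.+1) :=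
  \matrix_(i, j) if k == 0%N then -1 else if (k < L.-2)%N then (i == j :> nat)%:R else a i.

Definition deep_b k : 'rV[R]_(width L m k.+1) :=
  \row_j if k == 0%N then t j else if (k < L.-2)%N then 0 else beta.

Lemma width_hidden k : (0 < k <= L.-2)%N -> width L m k = m.
Proof. by case: k => // k /andP[_ hk] /=; rewrite ifT //; case: L hk L_ge3 => [|[|L']]. Qed.

Lemma fwd_deep_hidden k (n : 'I_N) (i : 'I_(width L m k)) : (0 < k <= L.-2)%N ->
  fwd X deep_W deep_b k n i = sgn (t i - X n 0).
Proof.
elim: k i => [//|[|k] IHk] i hk; rewrite fwdSE.
  by rewrite big_ord1 !mxE mulrN1 addrC.
have hk' : (k.+1 < L.-2)%N by case/andP: hk.
have hk1 : (0 < k.+1 <= L.-2)%N by exact: ltnW.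
under eq_bigr => l _ do rewrite IHk // mxE hk' mulr_natr mulrb.
rewrite -big_mkcond (big_ord1_eq _ (fun l => sgn (t l - X n 0))) mxE hk' addr0.
have -> : width L m k.+1 = width L m k.+2 by rewrite !width_hidden.
by rewrite ltn_ord sgn_id.
Qed.

Lemma fwd_deep_output k (n : 'I_N) (i : 'I_(width L m k)) : k = L.-1 ->
  fwd X deep_W deep_b k n i = sgn (beta + \sum_(l < m) a l * sgn (t l - X n 0)).
Proof.
have -> : L.-1 = L.-2.+1 by case: (L) L_ge3 => [|[|]].
case: k i => [|k] i // [ek]; subst k.
have hidden : (0 < L.-2 <= L.-2)%N by rewrite leqnn andbT; case: (L) L_ge3 => [|[|[|]]].
have L2 : (L.-2 == 0%N) = false by case/andP: hidden => /lt0n_neq0 /negbTE.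
rewrite fwdSE.
under eq_bigr => l _ do rewrite fwd_deep_hidden // mxE ltnn L2.
rewrite mxE ltnn L2 addrC (width_hidden hidden).
by under eq_bigr => l _ do rewrite mulrC.
Qed.

Lemma net_out_deep (n : 'I_N) :
  net_out X deep_W deep_b n 0 = sgn (beta + \sum_(l < m) a l * sgn (t l - X n 0)).
Proof. by rewrite /net_out castmxE fwd_deep_output // cast_ord_id. Qed.

End DeepNetwork.

Theorem proposition10 (R : realFieldType) (L m N : nat) (X : 'cV[R]_N) :
  (3 <= L)%N -> (1 <= m)%N ->
  (forall i j : 'I_N, (i < j)%N -> X j 0 < X i 0) ->
  forall h : 'cV[R]_N, H_K m h -> A_par L m X h.
Proof.
move=> L_ge3 _ X_decr h hH.
have [t [a [beta h_out]]] := switching_sgn_representation X_decr hH.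
exists (deep_W L m a), (deep_b L m t beta), 1; split; first by left.
split; last by case: hH => _ [].
by rewrite scale1r; apply/matrixP => n j; rewrite (ord1 j) net_out_deep // h_out.
Qed.
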